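(* Let $U$ be a Hilbert space, $T: U\rightrightarrows U$, $(\hat u,\hat w)\in\operatorname{graph}T$, and $P,N,M\in\mathcal{L}(U;U)$ with $M\ge P\ge0$. If $(P,M-P)\in\mathcal{P}(T^{-1}(\hat w),\hat u)$, then $(N,P)$-subregularity of $T$ at $(\hat u,\hat w)$ implies $(P,N,M)$-partial subregularity at the same point. If $T^{-1}(\hat w)=\{\hat u\}$ is a singleton, these two properties are equivalent.
   Context: For $T\in\mathcal{L}(U;U)$: $\|x\|^2_T:=\langle Tx,x\rangle$, $\operatorname{dist}^2_T(z,A):=\inf_{u\in A}\|z-u\|^2_T$ ($\inf\emptyset=+\infty$); $T\ge S$ means $T-S$ positive semidefinite. For $M,P,N\in\mathcal{L}(U;U)$ with $N\ge0$, $M\ge0$, $M\ge P$, $T$ is $(P,N,M)$-partially subregular at $(\hat u,\hat w)$ if there is a neighbourhood $\mathcal{U}\ni\hat u$ with $\operatorname{dist}^2_N(\hat w,T(u)) + \operatorname{dist}^2_{M-P}(u,T^{-1}(\hat w))\ge\operatorname{dist}^2_M(u,T^{-1}(\hat w))$ for all $u\in\mathcal{U}$. $T$ is $(N,M)$-subregular if it is $(M,N,M)$-partially subregular. For $M,M'\in\mathcal{L}(U;U)$, $A\subset U$, $\hat u\in A$: $(M,M')\in\mathcal{P}(A,\hat u)$ means there is a neighbourhood $\mathcal{U}'\ni\hat u$ such that each $u\in\mathcal{U}'$ has a common projection onto $A$ with respect to $\|\cdot\|_M$ and $\|\cdot\|_{M'}$. *)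

(* real Hilbert space modelled as a complete normed
   module U over R : realType together with an inner product inducing its norm. *)
From HB Require Import structures.
From mathcomp Require Import all_boot all_order all_algebra.
From mathcomp Require Import all_classical all_reals all_analysis.
Set Implicit Arguments. Unset Strict Implicit. Unset Printing Implicit Defensive.
Import Order.TTheory GRing.Theory Num.Theory.
Import numFieldNormedType.Exports.
Local Open Scope classical_set_scope.
Local Open Scope ring_scope.

Section Defs.
Context {R : realType} {U : completeNormedModType R}.

Definition is_hilbert_inner (ip : U -> U -> R) : Prop :=
  (forall x y, ip x y = ip y x) /\
  (forall (a : R) x y z, ip (a *: x + y) z = a * ip x z + ip y z) /\
  (forall x, `|x| ^+ 2 = ip x x).

Definition is_bounded_linear (T : U -> U) : Prop :=
  linear T /\ continuous T.

Definition op_sub (T S : U -> U) : U -> U := fun x => T x - S x.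

Definition sqnorm (ip : U -> U -> R) (T : U -> U) (x : U) : R := ip (T x) x.

Definition psd (ip : U -> U -> R) (T : U -> U) : Prop :=
  forall x, 0 <= sqnorm ip T x.
Definition op_ge (ip : U -> U -> R) (T S : U -> U) : Prop := psd ip (op_sub T S).

(* dist_T^2(z, A) := inf_{u in A} ||z - u||_T^2, with inf of the empty set = +oo *)
Definition sqdist (ip : U -> U -> R) (T : U -> U) (z : U) (A : set U) : \bar R :=
  ereal_inf [set (sqnorm ip T (z - u))%:E | u in A].

Definition invmap (T : U -> set U) (w : U) : set U := [set u | T u w].

(* (P,N,M)-partial subregularity of T at (hu,hw); the standing requirements
   N >= 0, M >= 0, M >= P of the definition are included. *)
Definition partially_subregular (ip : U -> U -> R) (P N M : U -> U)
    (T : U -> set U) (hu hw : U) : Prop :=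
  psd ip N /\ psd ip M /\ op_ge ip M P /\
  exists V : set U, nbhs hu V /\
    forall u, V u ->
      (sqdist ip N hw (T u) + sqdist ip (op_sub M P) u (invmap T hw)
        >= sqdist ip M u (invmap T hw))%E.

Definition subregular (ip : U -> U -> R) (N M : U -> U)
    (T : U -> set U) (hu hw : U) : Prop :=
  partially_subregular ip M N M T hu hw.

Definition is_proj (ip : U -> U -> R) (M : U -> U) (A : set U) (u p : U) : Prop :=
  A p /\ forall a, A a -> sqnorm ip M (u - p) <= sqnorm ip M (u - a).

Definition common_proj (ip : U -> U -> R) (M M' : U -> U) (A : set U) (hu : U) : Prop :=
  exists V : set U, nbhs hu V /\
    forall u, V u -> exists p, is_proj ip M A u p /\ is_proj ip M' A u p.

End Defs.

(** With A := T^{-1}(ŵ) ∋ û, the term dist²_{P-P}(u, A) vanishes, so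
    (N,P)-subregularity reads dist²_N(ŵ, T u) ≥ dist²_P(u, A).  If p is a common
    projection of u onto A for ‖·‖_P and ‖·‖_{M-P}, then
    dist²_M(u, A) ≤ ‖u - p‖²_M = dist²_P(u, A) + dist²_{M-P}(u, A), which gives
    partial subregularity.  When A = {û} every distance is attained at û, the
    common projection is û itself, and cancelling ‖u - û‖²_{M-P} from the
    partial subregularity inequality gives back subregularity. *)
From HB Require Import structures.
From mathcomp Require Import all_boot all_order all_algebra.
From mathcomp Require Import all_classical all_reals all_analysis.
From mathcomp Require Import lra.
Import Order.TTheory GRing.Theory Num.Theory.
Import numFieldNormedType.Exports.
Set Implicit Arguments. Unset Strict Implicit. Unset Printing Implicit Defensive.
Local Open Scope classical_set_scope.
Local Open Scope ring_scope.

Section SquaredDistances.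
Context {R : realType} {U : completeNormedModType R} {ip : U -> U -> R}.
Hypothesis hip : is_hilbert_inner ip.

Lemma ipBl x y z : ip (x - y) z = ip x z - ip y z.
Proof.
case: hip => _ [ipDl _]; have := ipDl (-1) y x z.
by rewrite scaleN1r mulN1r addrC => ->; rewrite addrC.
Qed.

Lemma sqnorm_op_sub (M P : U -> U) x :
  sqnorm ip (op_sub M P) x = sqnorm ip M x - sqnorm ip P x.
Proof. exact: ipBl. Qed.

Lemma sqnorm_op_subrr (P : U -> U) x : sqnorm ip (op_sub P P) x = 0.
Proof. by rewrite sqnorm_op_sub subrr. Qed.

Lemma op_ge_psd (M P : U -> U) : op_ge ip M P -> psd ip P -> psd ip M.
Proof.
move=> geMP psdP x; have := geMP x; rewrite sqnorm_op_sub.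
by have := psdP x; lra.
Qed.

Lemma op_gexx (P : U -> U) : op_ge ip P P.
Proof. by move=> x; rewrite sqnorm_op_subrr. Qed.

Lemma sqdist_le (M : U -> U) A u p :
  A p -> (sqdist ip M u A <= (sqnorm ip M (u - p))%:E)%E.
Proof.
by move=> Ap; apply: ge_ereal_inf; exists (sqnorm ip M (u - p))%:E => //; exists p.
Qed.

Lemma sqdist_is_proj (M : U -> U) A u p :
  is_proj ip M A u p -> sqdist ip M u A = (sqnorm ip M (u - p))%:E.
Proof.
move=> [Ap minp]; apply/le_anti/andP; split; first exact: sqdist_le.
by apply/ereal_infP => _ [a Aa <-]; rewrite lee_fin minp.
Qed.

Lemma is_proj_set1 (M : U -> U) u a : is_proj ip M [set a] u a.
Proof. by split => // _ ->. Qed.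

Lemma sqdist_set1 (M : U -> U) u a :
  sqdist ip M u [set a] = (sqnorm ip M (u - a))%:E.
Proof. exact/sqdist_is_proj/is_proj_set1. Qed.

Lemma sqdist_op_subrr (P : U -> U) A u a :
  A a -> sqdist ip (op_sub P P) u A = 0%E.
Proof.
move=> Aa; rewrite (@sqdist_is_proj _ A u a) ?sqnorm_op_subrr //.
by split => // b _; rewrite !sqnorm_op_subrr.
Qed.

Lemma sqdist_le_common_proj (P M : U -> U) A u p :
  is_proj ip P A u p -> is_proj ip (op_sub M P) A u p ->
  (sqdist ip M u A <= sqdist ip P u A + sqdist ip (op_sub M P) u A)%E.
Proof.
move=> projP projMP; rewrite (sqdist_is_proj projP) (sqdist_is_proj projMP).
rewrite -EFinD sqnorm_op_sub addrC subrK.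
exact/sqdist_le/projP.1.
Qed.

Lemma common_proj_set1 (M M' : U -> U) a : common_proj ip M M' [set a] a.
Proof.
by exists setT; split=> [|u _]; [exact: filterT | exists a; split; exact: is_proj_set1].
Qed.

End SquaredDistances.

Section Subregularity.
Context {R : realType} {U : completeNormedModType R} {ip : U -> U -> R}.
Hypothesis hip : is_hilbert_inner ip.
Variables (T : U -> set U) (hu hw : U) (P N M : U -> U).

Lemma subregular_partially_subregular :
  T hu hw -> op_ge ip M P -> psd ip P ->
  common_proj ip P (op_sub M P) (invmap T hw) hu ->
  subregular ip N P T hu hw -> partially_subregular ip P N M T hu hw.
Proof.
move=> Thu geMP psdP [V1 [nbhsV1 projV1]] [psdN [_ [_ [V2 [nbhsV2 subregV2]]]]].
split=> //; split; first exact: (op_ge_psd hip geMP psdP).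
split=> //.
exists (V1 `&` V2); split; first exact: filterI.
move=> u [/projV1 [p [projP projMP]] /subregV2].
rewrite (sqdist_op_subrr hip _ _ (Thu : invmap T hw hu)) adde0 => subreg_u.
apply: le_trans (sqdist_le_common_proj hip projP projMP) _.
exact: leeD2r.
Qed.

Lemma partially_subregular_subregular_set1 :
  invmap T hw = [set hu] -> psd ip P ->
  partially_subregular ip P N M T hu hw -> subregular ip N P T hu hw.
Proof.
move=> Tinv1 psdP [psdN [_ [_ [V [nbhsV partV]]]]].
split=> //; split=> //; split; first exact: (op_gexx hip).
exists V; split => // u /partV.
rewrite Tinv1 !sqdist_set1 (sqnorm_op_subrr hip) adde0 (sqnorm_op_sub hip).
case: (sqdist ip N hw (T u)) => [r| |] //= part_u; last exact: leey.
by move: part_u; rewrite -EFinD !lee_fin; lra.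
Qed.

End Subregularity.

Theorem proposition4p5 (R : realType) (U : completeNormedModType R)
  (ip : U -> U -> R) (hip : is_hilbert_inner ip)
  (T : U -> set U) (hu hw : U) (hgraph : T hu hw)
  (P N M : U -> U)
  (hP : is_bounded_linear P) (hN : is_bounded_linear N) (hM : is_bounded_linear M)
  (hMP : op_ge ip M P) (hP0 : psd ip P) :
  (common_proj ip P (op_sub M P) (invmap T hw) hu ->
     subregular ip N P T hu hw -> partially_subregular ip P N M T hu hw) /\
  (invmap T hw = [set hu] ->
     (subregular ip N P T hu hw <-> partially_subregular ip P N M T hu hw)).
Proof.
have part1 := subregular_partially_subregular hip (N := N) hgraph hMP hP0.
split=> [|Tinv1]; first exact: part1.
split; last exact: (partially_subregular_subregular_set1 hip Tinv1 hP0).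
by apply: part1; rewrite Tinv1; exact: common_proj_set1.
Qed.
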